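(* For all $s,t\in\{1,2,3,\dots\}\cup\{\infty\}$, $\mathcal F(s,t)=\{\pi^{-1}:\pi\in\mathcal F(t,s)\}$.
   Context: Forkstack sorting with capacities $s,t\in\{1,2,3,\dots\}\cup\{\infty\}$: a permutation $\pi=\pi_1\cdots\pi_n$ of $\{1,\dots,n\}$ is placed on an input stack with $\pi_1$ on top; a working stack and an output stack are initially empty. A move either (i) removes the top $k$ elements of the input stack ($1\le k\le s$) and places them as a block, relative order unchanged, on top of the working stack, or (ii) removes the top $l$ elements of the working stack ($1\le l\le t$) and places them as a block, relative order unchanged, on top of the output stack. $\pi$ is sortable if some sequence of moves ends with input and working stacks empty and the output stack reading $1,2,\dots,n$ from top to bottom. $\mathcal F(s,t)$ is the set of all sortable permutations (of all lengths); $\pi^{-1}$ denotes the inverse permutation. *)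

From mathcomp Require Import all_boot all_fingroup.
Set Implicit Arguments. Unset Strict Implicit. Unset Printing Implicit Defensive.

Inductive cap := Fin of nat | Inf.

Definition valid_cap (c : cap) : bool :=
  match c with Fin k => 0 < k | Inf => true end.

Definition cap_le (k : nat) (c : cap) : bool :=
  match c with Fin m => k <= m | Inf => true end.

(* A configuration: (input stack, working stack, output stack); each stack is
   a sequence whose head is the top of the stack. *)
Definition config (T : Type) := (seq T * seq T * seq T)%type.

Inductive fs_move (T : Type) (s t : cap) : config T -> config T -> Prop :=
| move_in_work (inp w o : seq T) (k : nat) :
    0 < k -> cap_le k s -> k <= size inp ->
    fs_move s t (inp, w, o) (drop k inp, take k inp ++ w, o)
| move_work_out (inp w o : seq T) (l : nat) :
    0 < l -> cap_le l t -> l <= size w ->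
    fs_move s t (inp, w, o) (inp, drop l w, take l w ++ o).

Inductive fs_reach (T : Type) (s t : cap) : config T -> config T -> Prop :=
| reach_refl c : fs_reach s t c c
| reach_step c1 c2 c3 : fs_move s t c1 c2 -> fs_reach s t c2 c3 -> fs_reach s t c1 c3.

(* pi : 'S_n is sortable: pi_1 ... pi_n placed on the input stack with pi_1 on
   top; we must reach empty input and working stacks with output reading
   0,1,...,n-1 from top to bottom (values shifted by -1 w.r.t. the paper). *)
Definition sortable (s t : cap) (n : nat) (pi : 'S_n) : Prop :=
  fs_reach s t ([seq pi i | i <- enum 'I_n], [::], [::])
               ([::], [::], enum 'I_n).

(** Reading a sorting run backwards exchanges the roles of the input and the
   output stack: a block moved from input to working stack becomes a block
   moved from working to output stack and vice versa, so the capacities swap.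
   The reversed run starts from the identity and ends at [pi]; relabelling
   every entry by [pi^-1] turns it into a run sorting [pi^-1]. *)
From mathcomp Require Import all_boot all_fingroup.
Set Implicit Arguments. Unset Strict Implicit. Unset Printing Implicit Defensive.

Definition config_swap (T : Type) (x : config T) : config T :=
  let: (inp, w, o) := x in (o, w, inp).

Definition config_map (T U : Type) (g : T -> U) (x : config T) : config U :=
  let: (inp, w, o) := x in (map g inp, map g w, map g o).

Lemma fs_reach_trans (T : Type) s t (c1 c2 c3 : config T) :
  fs_reach s t c1 c2 -> fs_reach s t c2 c3 -> fs_reach s t c1 c3.
Proof. by elim=> // x y z m _ IH /IH; apply: reach_step m. Qed.

Lemma fs_move_swap (T : Type) s t (c1 c2 : config T) :
  fs_move s t c1 c2 -> fs_move t s (config_swap c2) (config_swap c1).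
Proof.
case=> inp w o k k_gt0 k_cap k_size /=.
- have := @move_work_out T t s o (take k inp ++ w) (drop k inp) k k_gt0 k_cap.
  rewrite size_cat size_takel // leq_addr => /(_ isT).
  by rewrite drop_size_cat ?take_size_cat ?size_takel // cat_take_drop.
- have := @move_in_work T t s (take k w ++ o) (drop k w) inp k k_gt0 k_cap.
  rewrite size_cat size_takel // leq_addr => /(_ isT).
  by rewrite drop_size_cat ?take_size_cat ?size_takel // cat_take_drop.
Qed.

Lemma fs_reach_swap (T : Type) s t (c1 c2 : config T) :
  fs_reach s t c1 c2 -> fs_reach t s (config_swap c2) (config_swap c1).
Proof.
elim=> [c|x y z m _ IH]; first exact: reach_refl.
by apply: fs_reach_trans IH (reach_step (fs_move_swap m) (reach_refl _ _ _)).
Qed.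

Lemma fs_move_map (T U : Type) (g : T -> U) s t (c1 c2 : config T) :
  fs_move s t c1 c2 -> fs_move s t (config_map g c1) (config_map g c2).
Proof.
case=> inp w o k k_gt0 k_cap k_size /=; rewrite map_cat map_take map_drop.
- by apply: move_in_work; rewrite ?size_map.
- by apply: move_work_out; rewrite ?size_map.
Qed.

Lemma fs_reach_map (T U : Type) (g : T -> U) s t (c1 c2 : config T) :
  fs_reach s t c1 c2 -> fs_reach s t (config_map g c1) (config_map g c2).
Proof.
elim=> [c|x y z m _ IH]; first exact: reach_refl.
exact: reach_step (fs_move_map g m) IH.
Qed.

Lemma sortableV s t n (pi : 'S_n) : sortable s t pi -> sortable t s pi^-1%g.
Proof.
move=> /fs_reach_swap /(fs_reach_map (fun i => pi^-1%g i)) /=.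
suff -> : [seq pi^-1%g i | i <- [seq pi i | i <- enum 'I_n]] = enum 'I_n by [].
by rewrite -map_comp -[RHS]map_id; apply: eq_map => i /=; rewrite permK.
Qed.

Theorem mainTheorem3 (s t : cap) (hs : valid_cap s) (ht : valid_cap t) :
  forall (n : nat) (sigma : 'S_n),
    sortable s t sigma <-> exists pi : 'S_n, sortable t s pi /\ sigma = (pi^-1)%g.
Proof.
move=> n sigma; split=> [sort_sigma | [pi [sort_pi ->]]]; last exact: sortableV.
by exists sigma^-1%g; rewrite invgK; split=> //; apply: sortableV.
Qed.
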